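(* (a) Let $M\ge0$, let $u_1,\dots,u_M$ be nonzero complex numbers, and let $u_0,z\in\mathbb{C}$ with $z\notin\{u_0,\dots,u_M\}$. Then \[ \frac{1}{z-u_0}=\sum_{k=0}^M\frac{1}{z-u_k}\prod_{j=k+1}^M\frac{1-u_0/u_j}{1-z/u_j}. \] (b) Let $u_1,u_2,\dots$ be nonzero complex numbers for which there is a constant $c>0$ with $|u_j|\ge c j^2$ for all $j\ge1$, and let $u_0,z\in\mathbb{C}$ with $z\notin\{u_0,u_1,u_2,\dots\}$. Then \[ \frac{1}{z-u_0}=\sum_{k=0}^\infty\frac{1}{z-u_k}\prod_{j=k+1}^\infty\frac{1-u_0/u_j}{1-z/u_j}, \] where the infinite products and the series converge. *)

From Stdlib Require Import Reals.
Open Scope R_scope.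

Definition Cx : Type := (R * R)%type.
Definition C0 : Cx := (0, 0).
Definition C1 : Cx := (1, 0).
Definition Cadd (x y : Cx) : Cx := (fst x + fst y, snd x + snd y).
Definition Copp (x : Cx) : Cx := (- fst x, - snd x).
Definition Csub (x y : Cx) : Cx := Cadd x (Copp y).
Definition Cmul (x y : Cx) : Cx :=
  (fst x * fst y - snd x * snd y, fst x * snd y + snd x * fst y).
Definition Cinv (x : Cx) : Cx :=
  (fst x / (fst x ^ 2 + snd x ^ 2), - snd x / (fst x ^ 2 + snd x ^ 2)).
Definition Cdiv (x y : Cx) : Cx := Cmul x (Cinv y).
Definition Cmod (x : Cx) : R := sqrt (fst x ^ 2 + snd x ^ 2).

Fixpoint Csum (f : nat -> Cx) (n : nat) : Cx :=
  match n with
  | O => f O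
  | S m => Cadd (Csum f m) (f (S m))
  end.

Fixpoint Cprod_len (f : nat -> Cx) (a len : nat) : Cx :=
  match len with
  | O => C1
  | S l => Cmul (Cprod_len f a l) (f (a + l)%nat)
  end.

(* prod_{j=a}^{b} f j, equal to 1 when b < a *)
Definition Cprod (f : nat -> Cx) (a b : nat) : Cx := Cprod_len f a (S b - a).

Definition Ccv (s : nat -> Cx) (l : Cx) : Prop :=
  forall eps : R, eps > 0 -> exists N : nat, forall n : nat, (n >= N)%nat ->
    Cmod (Csub (s n) l) < eps.

Definition factor (u : nat -> Cx) (z : Cx) (j : nat) : Cx :=
  Cdiv (Csub C1 (Cdiv (u O) (u j))) (Csub C1 (Cdiv z (u j))).

(** (a) is a telescoping identity: with [f j = (1 - u_0/u_j)/(1 - z/u_j)], the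
    right-hand side of order [M+1] is [f (M+1)] times that of order [M] plus
    [1/(z - u_(M+1))], and [f (M+1)/(z - u_0) + 1/(z - u_(M+1)) = 1/(z - u_0)].

    (b) Since [f j - 1 = (z - u_0)/(u_j - z) = O(1/j^2)], the series
    [sum |f j - 1|] converges, hence so do the tail products
    [P_a = prod_(j >= a) f j], with [P_a = (prod_(j = a)^(a+L-1) f j) P_(a+L)]
    and [P_a -> 1].  Factoring [P_(n+1)] out of the partial sum of order [n]
    and applying (a) turns that partial sum into [P_(n+1)/(z - u_0)], which
    tends to [1/(z - u_0)]. *)

From Pilot Require Import Defs.
From Stdlib Require Import Reals Lra Lia ClassicalEpsilon.
From Coquelicot Require Import Coquelicot.
Open Scope R_scope.

Lemma Csum_S (f : nat -> C) n : Csum f (S n) = (Csum f n + f (S n))%C.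
Proof. reflexivity. Qed.

Lemma Csum_ext (f g : nat -> C) n :
  (forall k, (k <= n)%nat -> f k = g k) -> Csum f n = Csum g n.
Proof.
  induction n as [|n IH]; intros Hfg; [apply Hfg; lia|].
  rewrite !Csum_S, IH by (intros; apply Hfg; lia).
  rewrite Hfg by lia. reflexivity.
Qed.

Lemma Csum_mulr (f : nat -> C) c n :
  Csum (fun k => f k * c)%C n = (Csum f n * c)%C :> C.
Proof.
  induction n as [|n IH]; [reflexivity|].
  rewrite !Csum_S, IH. symmetry. apply Cmult_plus_distr_r.
Qed.

Lemma Cprod_len_0 (f : nat -> C) a : Cprod_len f a 0 = 1 :> C.
Proof. reflexivity. Qed.

Lemma Cprod_len_S (f : nat -> C) a L :
  Cprod_len f a (S L) = (Cprod_len f a L * f (a + L)%nat)%C.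
Proof. reflexivity. Qed.

Lemma Cprod_len_add (f : nat -> C) a L1 L2 :
  Cprod_len f a (L1 + L2) = (Cprod_len f a L1 * Cprod_len f (a + L1) L2)%C :> C.
Proof.
  induction L2 as [|L2 IH].
  - rewrite Nat.add_0_r, Cprod_len_0. symmetry. apply Cmult_1_r.
  - rewrite Nat.add_succ_r, !Cprod_len_S, IH, Nat.add_assoc. symmetry. apply Cmult_assoc.
Qed.

Lemma Cprod_S_len (f : nat -> C) k N : Cprod f (S k) N = Cprod_len f (S k) (N - k).
Proof. reflexivity. Qed.

Lemma Cprod_Sn_n (f : nat -> C) n : Cprod f (S n) n = 1 :> C.
Proof. rewrite Cprod_S_len, Nat.sub_diag. reflexivity. Qed.

Lemma Cprod_Sr (f : nat -> C) k M : (k <= M)%nat ->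
  Cprod f (S k) (S M) = (Cprod f (S k) M * f (S M))%C.
Proof.
  intros HkM. rewrite !Cprod_S_len.
  replace (S M - k)%nat with (S (M - k)) by lia.
  rewrite Cprod_len_S. do 3 f_equal. lia.
Qed.

Lemma factor_eq (u : nat -> C) z j :
  factor u z j = ((1 - u O / u j) / (1 - z / u j))%C.
Proof. reflexivity. Qed.

Lemma factor_sub_1 (u : nat -> C) z j : u j <> 0%C -> z <> u j ->
  (factor u z j - 1 = (z - u O) / (u j - z))%C.
Proof.
  intros Hu Hz. rewrite factor_eq.
  assert (Huz : (u j - z)%C <> 0%C) by (apply Cminus_eq_contra; auto).
  replace (1 - z / u j)%C with ((u j - z) / u j)%C by (field; exact Hu).
  field. auto.
Qed.

Lemma Cinv_telescope (a v z : C) : v <> 0%C -> z <> a -> z <> v ->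
  (/ (z - a) * ((1 - a / v) / (1 - z / v)) + / (z - v) * 1 = / (z - a))%C.
Proof.
  intros Hv Ha Hz.
  apply Cminus_eq_contra in Ha, Hz.
  assert (Hvz : (v - z)%C <> 0%C).
  { intros E. apply Hz. rewrite <- Copp_minus_distr, E. ring. }
  replace (1 - z / v)%C with ((v - z) / v)%C by (field; exact Hv).
  field. auto.
Qed.

Lemma partial_fraction_Cprod M (u : nat -> C) z :
  (forall j, (1 <= j <= M)%nat -> u j <> 0%C) ->
  (forall k, (k <= M)%nat -> z <> u k) ->
  (/ (z - u O))%C = Csum (fun k => / (z - u k) * Cprod (factor u z) (S k) M)%C M.
Proof.
  induction M as [|M IH]; intros Hu Hz.
  - cbn [Csum]. rewrite Cprod_Sn_n. symmetry. apply Cmult_1_r.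
  - rewrite Csum_S, Cprod_Sn_n.
    rewrite (Csum_ext _
      (fun k => / (z - u k) * Cprod (factor u z) (S k) M * factor u z (S M))%C)
      by (intros k Hk; rewrite Cprod_Sr by lia; apply Cmult_assoc).
    rewrite Csum_mulr, <- IH by (intros; first [apply Hu | apply Hz]; lia).
    rewrite factor_eq. symmetry.
    apply Cinv_telescope; [apply Hu | apply Hz | apply Hz]; lia.
Qed.

Lemma CcvE (s : nat -> C) l :
  Ccv s l <-> forall eps, eps > 0 ->
    exists N, forall n, (n >= N)%nat -> Cmod (s n - l)%C < eps.
Proof. reflexivity. Qed.

Lemma Ccv_ext (s t : nat -> C) l : Ccv s l -> (forall n, s n = t n) -> Ccv t l.
Proof.
  rewrite !CcvE. intros Hs E eps Heps.
  destruct (Hs eps Heps) as [N HN]. exists N. intros n Hn. rewrite <- E. auto.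
Qed.

Lemma Ccv_shift (s : nat -> C) l d : Ccv s l -> Ccv (fun n => s (d + n)%nat) l.
Proof.
  rewrite !CcvE. intros Hs eps Heps.
  destruct (Hs eps Heps) as [N HN]. exists N. intros n Hn. apply HN. lia.
Qed.

Lemma Ccv_sub_shift (s : nat -> C) l d : Ccv s l -> Ccv (fun n => s (n - d)%nat) l.
Proof.
  rewrite !CcvE. intros Hs eps Heps.
  destruct (Hs eps Heps) as [N HN]. exists (N + d)%nat. intros n Hn. apply HN. lia.
Qed.

Lemma Ccv_scal (s : nat -> C) l c : Ccv s l -> Ccv (fun n => c * s n)%C (c * l)%C.
Proof.
  rewrite !CcvE. intros Hs eps Heps.
  pose proof (Cmod_ge_0 c) as Hc.
  destruct (Hs (eps / (Cmod c + 1))) as [N HN]; [apply Rdiv_lt_0_compat; lra|].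
  exists N. intros n Hn. specialize (HN n Hn).
  replace (c * s n - c * l)%C with (c * (s n - l))%C by ring.
  rewrite Cmod_mult.
  apply (Rmult_lt_compat_l (Cmod c + 1)) in HN; [|lra].
  replace ((Cmod c + 1) * (eps / (Cmod c + 1))) with eps in HN by (field; lra).
  pose proof (Cmod_ge_0 (s n - l)). nra.
Qed.

Lemma Ccv_Cmod_le (s : nat -> C) l c r :
  Ccv s l -> (forall n, Cmod (s n - c)%C <= r) -> Cmod (l - c)%C <= r.
Proof.
  rewrite CcvE. intros Hs Hr.
  destruct (Rle_lt_dec (Cmod (l - c)) r) as [|Hlt]; [assumption|].
  destruct (Hs (Cmod (l - c) - r)) as [N HN]; [lra|].
  specialize (HN N (le_n N)). specialize (Hr N).
  assert (Cmod (l - c) <= Cmod (s N - l) + Cmod (s N - c)).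
  { replace (l - c)%C with (- (s N - l) + (s N - c))%C by ring.
    rewrite <- (Cmod_opp (s N - l)). apply Cmod_triangle. }
  lra.
Qed.

Lemma Ccv_unique (s : nat -> C) l1 l2 : Ccv s l1 -> Ccv s l2 -> l1 = l2.
Proof.
  intros H1 H2.
  assert (Hle : forall eps, eps > 0 -> Cmod (l1 - l2) <= eps).
  { intros eps Heps. destruct (proj1 (CcvE s l2) H2 eps Heps) as [N HN].
    apply (Ccv_Cmod_le (fun n => s (N + n)%nat)); [now apply Ccv_shift|].
    intros n. left. apply HN. lia. }
  apply Ceq_minus, Cmod_eq_0.
  pose proof (Cmod_ge_0 (l1 - l2)).
  destruct (Req_dec (Cmod (l1 - l2)) 0) as [|Hne]; [assumption|].
  specialize (Hle (Cmod (l1 - l2) / 2) ltac:(lra)). lra.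
Qed.

Lemma Ccv_of_bound (s : nat -> C) l (r : nat -> R) :
  (forall n, Cmod (s n - l)%C <= r n) -> Un_cv r 0 -> Ccv s l.
Proof.
  intros Hsr Hr. apply CcvE. intros eps Heps.
  destruct (Hr eps Heps) as [N HN]. exists N. intros n Hn.
  specialize (HN n Hn). unfold Rdist in HN. rewrite Rminus_0_r in HN.
  specialize (Hsr n). pose proof (Rle_abs (r n)). lra.
Qed.

Lemma Cauchy_crit_of_modulus (x r : nat -> R) :
  Un_cv r 0 -> (forall n m, (n <= m)%nat -> Rabs (x m - x n) <= r n) -> Cauchy_crit x.
Proof.
  intros Hr Hx eps Heps.
  destruct (Hr eps Heps) as [N HN]. exists N. intros n m Hn Hm.
  assert (Hrn : forall k, (k >= N)%nat -> r k < eps).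
  { intros k Hk. specialize (HN k Hk). unfold Rdist in HN.
    rewrite Rminus_0_r in HN. pose proof (Rle_abs (r k)). lra. }
  unfold Rdist. destruct (Nat.le_ge_cases n m) as [Hnm|Hmn].
  - rewrite <- Rabs_Ropp, Ropp_minus_distr. specialize (Hx n m Hnm).
    specialize (Hrn n Hn). lra.
  - specialize (Hx m n Hmn). specialize (Hrn m Hm). lra.
Qed.

Lemma Cmod_le_Rabs_add (w : C) : Cmod w <= Rabs (fst w) + Rabs (snd w).
Proof.
  pose proof (Rabs_pos (fst w)). pose proof (Rabs_pos (snd w)).
  unfold Cmod. rewrite <- (sqrt_pow2 (Rabs (fst w) + Rabs (snd w))) by lra.
  apply sqrt_le_1_alt. rewrite <- (pow2_abs (fst w)), <- (pow2_abs (snd w)). nra.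
Qed.

Lemma Ccv_of_Cauchy_modulus (s : nat -> C) (r : nat -> R) :
  Un_cv r 0 -> (forall n m, (n <= m)%nat -> Cmod (s m - s n)%C <= r n) ->
  exists l, Ccv s l.
Proof.
  intros Hr Hs.
  assert (Hfst : Cauchy_crit (fun n => fst (s n))).
  { apply (Cauchy_crit_of_modulus _ r Hr). intros n m Hnm.
    eapply Rle_trans; [|apply (Hs n m Hnm)].
    eapply Rle_trans; [|apply Rmax_Cmod]. apply Rmax_l. }
  assert (Hsnd : Cauchy_crit (fun n => snd (s n))).
  { apply (Cauchy_crit_of_modulus _ r Hr). intros n m Hnm.
    eapply Rle_trans; [|apply (Hs n m Hnm)].
    eapply Rle_trans; [|apply Rmax_Cmod]. apply Rmax_r. }
  destruct (Rcomplete.R_complete _ Hfst) as [l1 Hl1].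
  destruct (Rcomplete.R_complete _ Hsnd) as [l2 Hl2].
  exists (l1, l2). apply CcvE. intros eps Heps.
  destruct (Hl1 (eps / 2)) as [N1 HN1]; [lra|].
  destruct (Hl2 (eps / 2)) as [N2 HN2]; [lra|].
  exists (max N1 N2). intros n Hn.
  specialize (HN1 n ltac:(lia)). specialize (HN2 n ltac:(lia)). unfold Rdist in *.
  eapply Rle_lt_trans; [apply Cmod_le_Rabs_add|]. simpl. rewrite <- !Rminus_def. lra.
Qed.

Fixpoint psum (b : nat -> R) (n : nat) : R :=
  match n with O => 0 | S m => psum b m + b m end.

Lemma psum_le (b : nat -> R) n m :
  (forall j, 0 <= b j) -> (n <= m)%nat -> psum b n <= psum b m.
Proof.
  intros Hb Hnm. induction Hnm as [|m _ IH]; [lra|].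
  cbn [psum]. specialize (Hb m). lra.
Qed.

Lemma Un_cv_scal_gap (t : nat -> R) T E a :
  Un_cv t T -> Un_cv (fun n => E * (T - t (a + n)%nat)) 0.
Proof.
  intros Ht eps Heps. pose proof (Rabs_pos E).
  destruct (Ht (eps / (Rabs E + 1))) as [N HN]; [apply Rdiv_lt_0_compat; lra|].
  exists N. intros n Hn. specialize (HN (a + n)%nat ltac:(lia)).
  unfold Rdist in *. rewrite Rminus_0_r, Rabs_mult, Rabs_minus_sym.
  pose proof (Rabs_pos (t (a + n)%nat - T)).
  apply (Rmult_lt_compat_l (Rabs E + 1)) in HN; [|lra].
  replace ((Rabs E + 1) * (eps / (Rabs E + 1))) with eps in HN by (field; lra).
  nra.
Qed.

Definition defect (f : nat -> C) (j : nat) : R := Cmod (f j - 1).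

Lemma defect_ge_0 (f : nat -> C) j : 0 <= defect f j.
Proof. apply Cmod_ge_0. Qed.

Lemma Cmod_le_exp_Cmod_sub_1 (w : C) : Cmod w <= exp (Cmod (w - 1)).
Proof.
  eapply Rle_trans; [|apply exp_ineq1_le].
  replace w with (1 + (w - 1))%C at 1 by ring.
  eapply Rle_trans; [apply Cmod_triangle|]. rewrite Cmod_1. lra.
Qed.

Lemma Cmod_Cprod_len_le (f : nat -> C) a L :
  Cmod (Cprod_len f a L) <= exp (psum (defect f) (a + L) - psum (defect f) a).
Proof.
  induction L as [|L IH].
  - rewrite Nat.add_0_r, Rminus_eq_0, exp_0, Cprod_len_0, Cmod_1. lra.
  - rewrite Cprod_len_S, Cmod_mult, Nat.add_succ_r. cbn [psum].
    replace (psum (defect f) (a + L) + defect f (a + L)%nat - psum (defect f) a)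
      with ((psum (defect f) (a + L) - psum (defect f) a) + defect f (a + L)%nat)
      by ring.
    rewrite exp_plus.
    apply Rmult_le_compat; [apply Cmod_ge_0 | apply Cmod_ge_0 | exact IH |].
    apply Cmod_le_exp_Cmod_sub_1.
Qed.

Lemma Cmod_Cprod_len_sub_le (f : nat -> C) a E L d :
  (forall L, Cmod (Cprod_len f a L) <= E) ->
  Cmod (Cprod_len f a (L + d) - Cprod_len f a L)%C
    <= E * (psum (defect f) (a + (L + d)) - psum (defect f) (a + L)).
Proof.
  intros HE.
  (* [ring] does not see the [Cx]-valued [Cprod_len] terms as elements of [C]. *)
  assert (Hdecomp : forall p q w : C, (p * w - q = (p - q) + p * (w - 1))%C)
    by (intros; ring).
  induction d as [|d IH].
  - rewrite Nat.add_0_r, Rminus_eq_0. unfold Cminus. rewrite Cplus_opp_r, Cmod_0. lra.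
  - rewrite Nat.add_succ_r, Cprod_len_S, Hdecomp, Nat.add_succ_r. cbn [psum].
    eapply Rle_trans; [apply Cmod_triangle|]. rewrite Cmod_mult.
    pose proof (defect_ge_0 f (a + (L + d))).
    change (Cmod (f (a + (L + d))%nat - 1)) with (defect f (a + (L + d))).
    assert (Cmod (Cprod_len f a (L + d)) * defect f (a + (L + d))%nat
              <= E * defect f (a + (L + d))%nat)
      by (apply Rmult_le_compat_r; auto).
    lra.
Qed.

Lemma exp_le_compat x y : x <= y -> exp x <= exp y.
Proof. intros [Hlt|<-]; [left; apply exp_increasing, Hlt | lra]. Qed.

Section TailProducts.

Variables (f : nat -> C) (D : R).
Hypothesis psum_defect_cv : Un_cv (psum (defect f)) D.

Lemma psum_defect_le n : psum (defect f) n <= D.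
Proof.
  apply (growing_ineq _ _); [|exact psum_defect_cv].
  intros m. cbn [psum]. pose proof (defect_ge_0 f m). lra.
Qed.

Lemma Cmod_Cprod_len_le_exp a L : Cmod (Cprod_len f a L) <= exp D.
Proof.
  eapply Rle_trans; [apply Cmod_Cprod_len_le|]. apply exp_le_compat.
  pose proof (psum_defect_le (a + L)).
  pose proof (psum_le (defect f) 0 a (defect_ge_0 f) (Nat.le_0_l a)).
  cbn [psum] in *. lra.
Qed.

Lemma Cprod_len_cv a : exists l,
  Ccv (Cprod_len f a) l /\ Cmod (l - 1) <= exp D * (D - psum (defect f) a).
Proof.
  pose proof (exp_pos D).
  destruct (Ccv_of_Cauchy_modulus (Cprod_len f a)
              (fun n => exp D * (D - psum (defect f) (a + n)))) as [l Hl].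
  - apply Un_cv_scal_gap, psum_defect_cv.
  - intros n m Hnm. replace m with (n + (m - n))%nat by lia.
    eapply Rle_trans;
      [apply Cmod_Cprod_len_sub_le; intros; apply Cmod_Cprod_len_le_exp|].
    apply Rmult_le_compat_l; [lra|].
    pose proof (psum_defect_le (a + (n + (m - n)))). lra.
  - exists l. split; [exact Hl|].
    apply (Ccv_Cmod_le _ _ _ _ Hl). intros L.
    eapply Rle_trans; [apply (Cmod_Cprod_len_sub_le f a (exp D) 0 L);
                       intros; apply Cmod_Cprod_len_le_exp|].
    rewrite Nat.add_0_r. apply Rmult_le_compat_l; [lra|].
    pose proof (psum_defect_le (a + L)). cbn [Nat.add] in *. lra.
Qed.

Lemma tail_products : exists P : nat -> C,
  (forall a, Ccv (Cprod_len f a) (P a)) /\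
  (forall a L, P a = (Cprod_len f a L * P (a + L)%nat)%C) /\
  Ccv P (RtoC 1).
Proof.
  destruct (choice _ Cprod_len_cv) as [P HP].
  exists P. split; [|split].
  - intros a. apply HP.
  - intros a L. apply (Ccv_unique (fun n => Cprod_len f a (L + n))).
    + apply Ccv_shift, HP.
    + apply (Ccv_ext (fun n => Cprod_len f a L * Cprod_len f (a + L) n)%C).
      * apply Ccv_scal, HP.
      * intros n. symmetry. apply Cprod_len_add.
  - apply (Ccv_of_bound _ _ (fun n => exp D * (D - psum (defect f) (0 + n)))).
    + intros a. apply HP.
    + apply Un_cv_scal_gap, psum_defect_cv.
Qed.

End TailProducts.

Lemma inv_sqr_le_telescope K x : 0 <= K -> 1 <= x ->
  K / (x + 1) ^ 2 <= K / x - K / (x + 1).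
Proof.
  intros HK Hx.
  replace (K / x - K / (x + 1)) with (K / (x * (x + 1))) by (field; lra).
  unfold Rdiv. apply Rmult_le_compat_l; [exact HK|].
  apply Rinv_le_contravar; nra.
Qed.

Lemma psum_cv_of_inv_sqr_bound (b : nat -> R) K J :
  (forall j, 0 <= b j) -> 0 <= K -> (1 <= J)%nat ->
  (forall j, (J <= j)%nat -> b j <= K / INR j ^ 2) ->
  exists D, Un_cv (psum b) D.
Proof.
  intros Hb HK HJ Hbj.
  assert (HJ1 : 1 <= INR J) by (apply (le_INR 1); exact HJ).
  assert (Htail : forall d,
            psum b (S (J + d)) <= psum b (S J) + K / INR J - K / INR (J + d)).
  { induction d as [|d IH].
    - rewrite Nat.add_0_r. lra.
    - rewrite Nat.add_succ_r. cbn [psum] in *.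
      pose proof (Hbj (S (J + d)) ltac:(lia)) as Hb'.
      assert (1 <= INR (J + d)) by (apply (le_INR 1); lia).
      rewrite S_INR in *.
      pose proof (inv_sqr_le_telescope K (INR (J + d)) HK ltac:(assumption)).
      lra. }
  destruct (growing_cv (psum b)) as [D HD]; [| |exists D; exact HD].
  - intros n. cbn [psum]. specialize (Hb n). lra.
  - exists (psum b (S J) + K / INR J). intros x [n ->].
    assert (0 <= K / INR J) by (apply Rle_mult_inv_pos; lra).
    destruct (Nat.le_gt_cases n (S J)) as [Hn|Hn].
    + pose proof (psum_le b n (S J) Hb Hn). lra.
    + destruct n as [|m]; [lia|].
      specialize (Htail (m - J)%nat). replace (J + (m - J))%nat with m in Htail by lia.
      assert (1 <= INR m) by (apply (le_INR 1); lia).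
      assert (0 <= K / INR m) by (apply Rle_mult_inv_pos; lra). lra.
Qed.

Lemma defect_factor_le (u : nat -> C) z c j :
  c > 0 -> (1 <= j)%nat -> u j <> 0%C -> z <> u j ->
  Cmod (u j) >= c * INR j ^ 2 -> c * INR j >= 2 * Cmod z ->
  defect (factor u z) j <= (2 * Cmod (z - u O) / c) / INR j ^ 2.
Proof.
  intros Hc Hj Hu Hz Huj Hzj.
  assert (Huz : (u j - z)%C <> 0%C) by (apply Cminus_eq_contra; auto).
  unfold defect. rewrite factor_sub_1, Cmod_div by assumption.
  assert (HJ : 1 <= INR j) by (apply (le_INR 1); exact Hj).
  assert (Hgap : c * INR j ^ 2 / 2 <= Cmod (u j - z)).
  { assert (Cmod (u j) <= Cmod (u j - z) + Cmod z).
    { replace (u j) with ((u j - z) + z)%C at 1 by ring. apply Cmod_triangle. }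
    assert (c * INR j <= c * INR j ^ 2) by (apply Rmult_le_compat_l; simpl; nra).
    lra. }
  assert (0 < c * INR j ^ 2 / 2) by (pose proof (pow_lt (INR j) 2 ltac:(lra)); nra).
  replace (2 * Cmod (z - u O) / c / INR j ^ 2)
    with (Cmod (z - u O) / (c * INR j ^ 2 / 2)) by (field; split; lra).
  unfold Rdiv. apply Rmult_le_compat_l; [apply Cmod_ge_0|].
  apply Rinv_le_contravar; assumption.
Qed.

Lemma partial_fraction_tail_products (u : nat -> C) z c :
  c > 0 ->
  (forall j, (1 <= j)%nat -> u j <> 0%C) ->
  (forall j, (1 <= j)%nat -> Cmod (u j) >= c * INR j ^ 2) ->
  (forall k, z <> u k) ->
  exists P : nat -> C,
    (forall k, Ccv (fun N => Cprod (factor u z) (S k) N) (P k)) /\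
    Ccv (fun n => Csum (fun k => / (z - u k) * P k)%C n) (/ (z - u O))%C.
Proof.
  intros Hc Hu Huj Hz.
  destruct (INR_archimed c (2 * Cmod z) Hc) as [J HJ].
  assert (Hlarge : forall j, (S J <= j)%nat -> c * INR j >= 2 * Cmod z).
  { intros j Hj. assert (INR J <= INR j) by (apply le_INR; lia). nra. }
  destruct (psum_cv_of_inv_sqr_bound (defect (factor u z))
              (2 * Cmod (z - u O) / c) (S J)) as [D HD].
  - apply defect_ge_0.
  - pose proof (Cmod_ge_0 (z - u O)). apply Rle_mult_inv_pos; lra.
  - lia.
  - intros j Hj. apply defect_factor_le;
      [exact Hc | lia | apply Hu; lia | apply Hz | apply Huj; lia | now apply Hlarge].
  - destruct (tail_products _ _ HD) as (P & HP & Hsplit & HP1).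
    exists (fun k => P (S k)). split.
    + intros k. exact (Ccv_sub_shift _ _ k (HP (S k))).
    + assert (Hlim : Ccv (fun n => / (z - u O) * P (S n))%C (/ (z - u O) * 1)%C)
        by exact (Ccv_scal _ _ _ (Ccv_shift _ _ 1 HP1)).
      rewrite Cmult_1_r in Hlim. apply (Ccv_ext _ _ _ Hlim). intros n.
      rewrite (partial_fraction_Cprod n u z), <- Csum_mulr
        by (intros; auto; apply Hu; lia).
      apply Csum_ext. intros k Hk.
      rewrite Cprod_S_len, (Hsplit (S k) (n - k)%nat).
      replace (S k + (n - k))%nat with (S n) by lia.
      symmetry. apply Cmult_assoc.
Qed.

(* Give the names shadowed by Coquelicot ([Cmod], [Cinv], ...) back to Defs. *)
Import Defs.

Theorem lemma5p1 :
  (forall (M : nat) (u : nat -> Cx) (z : Cx),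
     (forall j : nat, (1 <= j <= M)%nat -> u j <> C0) ->
     (forall k : nat, (k <= M)%nat -> z <> u k) ->
     Cinv (Csub z (u O)) =
     Csum (fun k => Cmul (Cinv (Csub z (u k))) (Cprod (factor u z) (S k) M)) M)
  /\
  (forall (u : nat -> Cx) (z : Cx),
     (forall j : nat, (1 <= j)%nat -> u j <> C0) ->
     (exists c : R, c > 0 /\
        forall j : nat, (1 <= j)%nat -> Cmod (u j) >= c * (INR j) ^ 2) ->
     (forall k : nat, z <> u k) ->
     exists P : nat -> Cx,
       (forall k : nat, Ccv (fun N => Cprod (factor u z) (S k) N) (P k)) /\
       Ccv (fun n => Csum (fun k => Cmul (Cinv (Csub z (u k))) (P k)) n)
           (Cinv (Csub z (u O)))).
Proof.
  split.
  - exact partial_fraction_Cprod.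
  - intros u z Hu [c [Hc Huj]] Hz.
    exact (partial_fraction_tail_products u z c Hc Hu Huj Hz).
Qed.
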